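(* Let $\mathcal{C}$ be any class of metric spaces. Say a group has Property (F$\mathcal{C}$) if for every action of it by isometries on a space $X\in\mathcal{C}$, all orbits are bounded. Let $G$ be a group in which every countable subset is contained in a subgroup having Property (F$\mathcal{C}$). Then $G$ has Property (F$\mathcal{C}$). *)

From Stdlib Require Import Reals.
Open Scope R_scope.

Record MetricSpace := {
  ms_carrier :> Type;
  ms_dist : ms_carrier -> ms_carrier -> R;
  ms_dist_self : forall x, ms_dist x x = 0;
  ms_dist_eq0 : forall x y, ms_dist x y = 0 -> x = y;
  ms_dist_sym : forall x y, ms_dist x y = ms_dist y x;
  ms_dist_tri : forall x y z, ms_dist x z <= ms_dist x y + ms_dist y z
}.

Definition MetricClass := MetricSpace -> Prop.

Record Group := {
  gr_carrier :> Type;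
  gr_mul : gr_carrier -> gr_carrier -> gr_carrier;
  gr_one : gr_carrier;
  gr_inv : gr_carrier -> gr_carrier;
  gr_assoc : forall x y z, gr_mul x (gr_mul y z) = gr_mul (gr_mul x y) z;
  gr_one_l : forall x, gr_mul gr_one x = x;
  gr_one_r : forall x, gr_mul x gr_one = x;
  gr_inv_l : forall x, gr_mul (gr_inv x) x = gr_one;
  gr_inv_r : forall x, gr_mul x (gr_inv x) = gr_one
}.

Arguments gr_mul {g}.
Arguments gr_one {g}.
Arguments gr_inv {g}.

Definition is_subgroup (G : Group) (H : G -> Prop) : Prop :=
  H gr_one /\
  (forall x y, H x -> H y -> H (gr_mul x y)) /\
  (forall x, H x -> H (gr_inv x)).

(** An action by isometries of the subgroup H (viewed as a group in its own
    right) on the metric space X: act h is only constrained for h in H. *)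
Definition isometric_action (G : Group) (H : G -> Prop) (X : MetricSpace)
    (act : G -> X -> X) : Prop :=
  (forall x, act gr_one x = x) /\
  (forall g h x, H g -> H h -> act (gr_mul g h) x = act g (act h x)) /\
  (forall g x y, H g -> ms_dist X (act g x) (act g y) = ms_dist X x y).

Definition bounded_set (X : MetricSpace) (S : X -> Prop) : Prop :=
  exists M : R, forall x y, S x -> S y -> ms_dist X x y <= M.

Definition orbit (G : Group) (H : G -> Prop) (X : MetricSpace)
    (act : G -> X -> X) (x : X) : X -> Prop :=
  fun y => exists h, H h /\ y = act h x.

Definition PropertyF_sub (C : MetricClass) (G : Group) (H : G -> Prop) : Prop :=
  forall (X : MetricSpace), C X ->
  forall act : G -> X -> X, isometric_action G H X act ->
  forall x : X, bounded_set X (orbit G H X act x).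

Definition PropertyF (C : MetricClass) (G : Group) : Prop :=
  PropertyF_sub C G (fun _ => True).

(** Countable subsets (finite or countably infinite, including empty). *)
Definition countable_subset (G : Group) (S : G -> Prop) : Prop :=
  exists f : nat -> G, forall x, S x -> exists n, f n = x.

(* If the orbit of x under G were unbounded, we could pick g_n in G moving x
   by more than n.  The countable set {g_n} lies in a subgroup H with
   Property (F C); the action of G restricts to an isometric action of H,
   whose orbit of x is bounded, so d(x, g_n x) is bounded: a contradiction. *)

From Stdlib Require Import Reals Lra Classical ClassicalEpsilon.

Lemma isometric_action_sub (G : Group) (H K : G -> Prop) (X : MetricSpace)
    (act : G -> X -> X) :
  (forall g, H g -> K g) -> isometric_action G K X act ->
  isometric_action G H X act.
Proof.
  intros HK [act_one [act_mul act_isom]].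
  split; [exact act_one | split]; auto.
Qed.

Lemma countable_range (G : Group) (u : nat -> G) :
  countable_subset G (fun g => exists n, u n = g).
Proof. exists u; auto. Qed.

Lemma orbit_bounded_of_dist_le (G : Group) (H : G -> Prop) (X : MetricSpace)
    (act : G -> X -> X) (x : X) (M : R) :
  (forall h, H h -> ms_dist X x (act h x) <= M) ->
  bounded_set X (orbit G H X act x).
Proof.
  intros HM; exists (M + M).
  intros y z [g [Hg ->]] [h [Hh ->]].
  pose proof (ms_dist_tri X (act g x) x (act h x)) as tri.
  rewrite (ms_dist_sym X (act g x) x) in tri.
  pose proof (HM g Hg); pose proof (HM h Hh); lra.
Qed.

Lemma dist_le_of_orbit_bounded (G : Group) (H : G -> Prop) (X : MetricSpace)
    (act : G -> X -> X) (x : X) :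
  H gr_one -> act gr_one x = x -> bounded_set X (orbit G H X act x) ->
  exists M, forall h, H h -> ms_dist X x (act h x) <= M.
Proof.
  intros H1 act_one [M HM]; exists M; intros h Hh.
  apply HM; [exists gr_one; auto | exists h; auto].
Qed.

Lemma unbounded_sequence (A : Type) (f : A -> R) :
  ~ (exists M, forall a, f a <= M) -> exists u : nat -> A, forall n, INR n < f (u n).
Proof.
  intros Hunb; apply (choice (fun n a => INR n < f a)); intros n.
  apply NNPP; intros Hn; apply Hunb; exists (INR n); intros a.
  apply Rnot_lt_le; intros Hlt; apply Hn; exists a; exact Hlt.
Qed.

Theorem mainTheorem12 (C : MetricClass) (G : Group) :
  (forall S : G -> Prop, countable_subset G S ->
     exists H : G -> Prop, is_subgroup G H /\ (forall x, S x -> H x) /\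
       PropertyF_sub C G H) ->
  PropertyF C G.
Proof.
  intros HS X CX act Hact x.
  destruct (classic (exists M, forall g, ms_dist X x (act g x) <= M))
    as [[M HM] | Hunb].
  - exact (orbit_bounded_of_dist_le G _ X act x M (fun g _ => HM g)).
  - exfalso.
    destruct (unbounded_sequence G _ Hunb) as [u Hu].
    destruct (HS _ (countable_range G u)) as [H [[H1 _] [uH HF]]].
    assert (HactH : isometric_action G H X act)
      by exact (isometric_action_sub G H _ X act (fun _ _ => I) Hact).
    destruct (dist_le_of_orbit_bounded G H X act x H1 (proj1 Hact x)
                (HF X CX act HactH x)) as [M HM].
    destruct (INR_unbounded M) as [n Hn].
    pose proof (HM (u n) (uH _ (ex_intro _ n eq_refl))).
    pose proof (Hu n); lra.
Qed.
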